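(* Let $\varphi:U\times U\to V$ be a fully-regular alternating bilinear map. Then $\mathcal{S}_\varphi=\{\varphi(x,-)\mid x\in U\}\subseteq\mathcal{L}(U,V)$ has the column property, i.e. every matrix space representing it in some bases of $U$ and $V$ has the column property.
   Context: $U,V$ finite-dimensional over a field $\mathbb{K}$. $\varphi$ is fully-regular if $V$ is spanned by the values of $\varphi$ and $\varphi(x,-)\neq 0$ for every nonzero $x\in U$ (equivalently $\varphi(-,x)\ne0$, as $\varphi$ is alternating). Matrix spaces are equivalent ($\sim$) if $\mathcal{M}=P\mathcal{M}'Q$ with $P,Q$ invertible. A subspace is defective if none of its matrices has rank equal to its number of columns. $\mathcal{M}\subseteq\mathrm{Mat}_{m,n}(\mathbb{K})$ is $(r,s)$-decomposed ($0\le r\le m$, $1\le s\le n$) if every $M$ is of the form $\begin{bmatrix} ?_{r\times s}& C(M)\\ B(M)&0_{(m-r)\times(n-s)}\end{bmatrix}$, with lower space $B(\mathcal{M})$; $\mathcal{M}$ has the column property if every $(r,s)$-decomposed space equivalent to $\mathcal{M}$ has defective lower space. *)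

From HB Require Import structures.
From mathcomp Require Import all_boot all_order all_algebra.
Set Implicit Arguments.
Unset Strict Implicit.
Unset Printing Implicit Defensive.
Import GRing.Theory.
Local Open Scope ring_scope.

Section Defs.
Variable K : fieldType.

Definition mxspace (m n : nat) := 'M[K]_(m, n) -> Prop.

Definition mx_equiv m n (M M' : mxspace m n) : Prop :=
  exists (P : 'M[K]_m) (Q : 'M[K]_n),
    [/\ P \in unitmx, Q \in unitmx &
        forall A, M A <-> exists2 B, M' B & A = P *m B *m Q].

(* entry (i,j) of A with nat indices (0 outside the range) *)
Definition mget m n (A : 'M[K]_(m, n)) (i j : nat) : K :=
  if (insub i : option 'I_m) is Some i' then
    if (insub j : option 'I_n) is Some j' then A i' j' else 0
  else 0.

Definition decomposed m n (M : mxspace m n) (r s : nat) : Prop :=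
  forall A, M A -> forall (i : 'I_m) (j : 'I_n), (r <= i)%N -> (s <= j)%N -> A i j = 0.

Definition lower_block m n (r s : nat) (A : 'M[K]_(m, n)) : 'M[K]_(m - r, s) :=
  \matrix_(i < m - r, j < s) mget A (r + i) j.

Definition lower_space m n (M : mxspace m n) (r s : nat) : mxspace (m - r) s :=
  fun B => exists2 A, M A & B = lower_block r s A.

Definition defective p q (N : mxspace p q) : Prop :=
  forall B, N B -> \rank B != q.

Arguments lower_space {m n} M r s.
Arguments lower_block {m n} r s A.

Definition column_property m n (M : mxspace m n) : Prop :=
  forall r s, (r <= m)%N -> (0 < s <= n)%N ->
  forall M' : mxspace m n, mx_equiv M M' -> decomposed M' r s ->
  defective (lower_space M' r s).

Definition alt_bilinear (U V : vectType K) (phi : U -> U -> V) : Prop :=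
  [/\ forall x, linear (phi x), forall y, linear (phi^~ y) & forall x, phi x x = 0].

Definition fully_regular (U V : vectType K) (phi : U -> U -> V) : Prop :=
  (forall W : {vspace V}, (forall x y, phi x y \in W) -> W = fullv) /\
  (forall x, x != 0 -> exists y, phi x y != 0).

(* the matrix space representing S_phi = {phi(x,-)} in bases e of U, f of V:
   column j of the matrix of phi(x,-) holds the f-coordinates of phi(x, e_j) *)
Definition S_mx (U V : vectType K) (phi : U -> U -> V) n m
  (e : n.-tuple U) (f : m.-tuple V) : mxspace m n :=
  fun A => exists x : U, A = \matrix_(i < m, j < n) coord f i (phi x (tnth e j)).

End Defs.

From HB Require Import structures.
From mathcomp Require Import all_boot all_order all_algebra.
Set Implicit Arguments.
Unset Strict Implicit.
Unset Printing Implicit Defensive.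
Import GRing.Theory.
Local Open Scope ring_scope.

(* Write the matrix space of phi in coordinates as the range of a map
   Psi : K^n -> Mat_{m,n}(K) with Psi additive and Psi u *m u = 0: an
   "alternating family".  Such ranges ("alternating spaces") are stable under
   equivalence M' = P^-1 M Q^-1, since u |-> P^-1 Psi(Q^-1 u) Q^-1 is again an
   alternating family.  The heart of the proof is the compression lemma: if the
   lower-right block of every Psi y vanishes, split u = u1 + u2 along the first
   s coordinates; antisymmetry gives B(Psi u) u1 = -(lower rows of Psi u1 u1) = 0,
   and when u1 = 0 the same computation shows B(Psi u) = 0; either way the
   lower block B(Psi u) has a nonzero kernel vector, so it is defective. *)

Section AlternatingFamilies.
Variable K : fieldType.

(* Psi is an alternating family when (u, w) |-> Psi u *m w is additive in u
   and vanishes on the diagonal (it is automatically linear in w). *)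
Definition alternating_family m n (Psi : 'cV[K]_n -> 'M[K]_(m, n)) : Prop :=
  {morph Psi : u v / u + v} /\ forall u, Psi u *m u = 0.

(* Polarising the diagonal condition gives antisymmetry. *)
Lemma alternating_family_antisym m n (Psi : 'cV[K]_n -> 'M[K]_(m, n)) :
  alternating_family Psi -> forall u v, Psi u *m v = - (Psi v *m u).
Proof.
case=> Psi_add Psi_alt u v; apply/eqP; rewrite -addr_eq0.
have := Psi_alt (u + v).
by rewrite Psi_add mulmxDl !mulmxDr !Psi_alt add0r addr0 => ->.
Qed.

Lemma alternating_family_equiv m n (Psi : 'cV[K]_n -> 'M[K]_(m, n))
    (C : 'M[K]_m) (D : 'M[K]_n) :
  alternating_family Psi -> alternating_family (fun u => C *m Psi (D *m u) *m D).
Proof.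
case=> Psi_add Psi_alt; split=> [u v | u] /=.
  by rewrite mulmxDr Psi_add mulmxDr mulmxDl.
by rewrite -mulmxA -(mulmxA C) Psi_alt mulmx0.
Qed.

Lemma rank_lt_of_kernel p s (B : 'M[K]_(p, s)) (c : 'cV[K]_s) :
  c != 0 -> B *m c = 0 -> \rank B != s.
Proof.
move=> c_neq0 Bc0; apply: contra c_neq0 => /eqP rankB.
have frBt : row_free B^T by rewrite /row_free mxrank_tr rankB.
have : c^T *m B^T = 0 *m B^T by rewrite -trmx_mul Bc0 trmx0 mul0mx.
by move/(row_free_inj frBt) => ct0; rewrite -trmx_eq0 ct0.
Qed.

(* Compression lemma.  If every L *m Psi y vanishes on the range of
   1 - R *m R', then each L *m Psi u *m R has a nonzero kernel vector:
   R' *m u when it is nonzero, and every vector otherwise. *)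
Lemma alternating_family_compression m n p s (Psi : 'cV[K]_n -> 'M[K]_(m, n))
    (L : 'M[K]_(p, m)) (R : 'M[K]_(n, s)) (R' : 'M[K]_(s, n)) :
  alternating_family Psi -> (0 < s)%N ->
  (forall y, L *m Psi y *m (1%:M - R *m R') = 0) ->
  forall u, \rank (L *m Psi u *m R) != s.
Proof.
move=> altPsi s_gt0 Psi_split u.
have projE y : L *m Psi y *m u = L *m Psi y *m R *m (R' *m u).
  move/(congr1 (mulmx^~ u)): (Psi_split y).
  rewrite /= mul0mx mulmxBr mulmx1 mulmxBl !mulmxA => /eqP.
  by rewrite subr_eq0 => /eqP.
have compressE c : L *m Psi u *m R *m c = - (L *m Psi (R *m c) *m R *m (R' *m u)).
  rewrite -(mulmxA _ R) -(mulmxA L) (alternating_family_antisym altPsi).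
  by rewrite mulmxN (mulmxA L _ u) projE.
have [Ru0 | Ru_neq0] := eqVneq (R' *m u) 0.
  apply: (@rank_lt_of_kernel _ _ _ (const_mx 1)).
    apply/negP => /eqP/matrixP/(_ (Ordinal s_gt0) 0); rewrite !mxE.
    by apply/eqP; exact: oner_neq0.
  by rewrite compressE Ru0 mulmx0 oppr0.
apply: (rank_lt_of_kernel Ru_neq0).
by rewrite compressE -!mulmxA (mulmxA R) altPsi.2 mulmx0 oppr0.
Qed.

End AlternatingFamilies.

Section LowerBlocks.
Variable K : fieldType.

Lemma lower_row_subproof m r (i : 'I_(m - r)) : (r + i < m)%N.
Proof. by have := ltn_ord i; rewrite ltn_subRL. Qed.

Definition lower_row m r (i : 'I_(m - r)) : 'I_m := Ordinal (lower_row_subproof i).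

Lemma mulmx_pid_entry p n s (A : 'M[K]_(p, n)) (s_le_n : (s <= n)%N) i j :
  (A *m pid_mx s) i j = A i (widen_ord s_le_n j).
Proof.
rewrite mxE (bigD1 (widen_ord s_le_n j)) //= mxE /= eqxx ltn_ord mulr1.
rewrite big1 ?addr0 // => l l_neq; rewrite mxE.
suff /negPf-> : (l != j :> nat) by rewrite mulr0.
by apply: contra l_neq => /eqP l_j; apply/eqP/val_inj.
Qed.

Lemma lower_blockE m n r s (A : 'M[K]_(m, n)) (s_le_n : (s <= n)%N) :
  lower_block r s A = rowsub (@lower_row m r) 1%:M *m A *m pid_mx s.
Proof.
apply/matrixP => i j; rewrite -rowsubE (mulmx_pid_entry _ s_le_n) !mxE /mget.
case: insubP => [i' _ i'E | ]; last by rewrite lower_row_subproof.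
case: insubP => [j' _ j'E | ]; last by rewrite (leq_trans (ltn_ord j)).
by congr (A _ _); apply: val_inj.
Qed.

Lemma decomposed_lower_right m n r s (M : mxspace K m n) (A : 'M[K]_(m, n)) :
  (s <= n)%N -> decomposed M r s -> M A ->
  rowsub (@lower_row m r) 1%:M *m A
    *m (1%:M - (pid_mx s : 'M[K]_(n, s)) *m pid_mx s) = 0.
Proof.
move=> s_le_n decM MA; rewrite pid_mx_id // -rowsubE mulmxBr mulmx1.
apply/matrixP => i j; rewrite !mxE (bigD1 j) //= big1 ?addr0 => [|l l_neq]; last first.
  by rewrite !mxE (inj_eq val_inj) (negPf l_neq) mulr0.
rewrite !mxE eqxx /=; case: ltnP => [_ | s_le_j]; first by rewrite mulr1 subrr.
by rewrite mulr0 subr0 (decM A MA) //= leq_addr.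
Qed.

End LowerBlocks.

Section Coordinates.
Variables (K : fieldType) (U V : vectType K) (phi : U -> U -> V).
Hypothesis phi_linr : forall x, linear (phi x).
Hypothesis phi_linl : forall y, linear (phi^~ y).
Hypothesis phi_alt : forall x, phi x x = 0.
Variables (n m : nat) (e : n.-tuple U) (f : m.-tuple V).

Definition comb (v : 'cV[K]_n) : U := \sum_j v j 0 *: tnth e j.

Definition phi_mx (x : U) : 'M[K]_(m, n) :=
  \matrix_(i, j) coord f i (phi x (tnth e j)).

Lemma comb_add : {morph comb : u v / u + v}.
Proof.
by move=> u v; rewrite /comb -big_split; apply: eq_bigr => j _; rewrite mxE scalerDl.
Qed.

Lemma combK : basis_of fullv e -> forall x, comb (\col_j coord e j x) = x.
Proof.
move=> e_basis x; rewrite [RHS](coord_basis e_basis (memvf x)).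
by apply: eq_bigr => j _; rewrite mxE (tnth_nth 0).
Qed.

Lemma phi_addl x y z : phi (x + y) z = phi x z + phi y z.
Proof.
pose phiz : {linear U -> V} :=
  HB.pack (phi^~ z) (GRing.isLinear.Build _ _ _ _ _ (phi_linl z)).
exact: (linearD phiz).
Qed.

Lemma phi_comb x v : phi x (comb v) = \sum_j v j 0 *: phi x (tnth e j).
Proof.
pose phix : {linear U -> V} :=
  HB.pack (phi x) (GRing.isLinear.Build _ _ _ _ _ (phi_linr x)).
have -> : phi x (comb v) = phix (comb v) by [].
by rewrite linear_sum; apply: eq_bigr => j _; rewrite linearZ.
Qed.

Lemma phi_mx_add : {morph phi_mx : x y / x + y}.
Proof. by move=> x y; apply/matrixP => i j; rewrite !mxE phi_addl linearD. Qed.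

Lemma phi_mxM x v : phi_mx x *m v = \col_i coord f i (phi x (comb v)).
Proof.
apply/matrixP => i k; rewrite (ord1 k) !mxE phi_comb linear_sum.
by apply: eq_bigr => j _; rewrite linearZ !mxE mulrC.
Qed.

Lemma phi_coord_family : alternating_family (fun v => phi_mx (comb v)).
Proof.
split=> [u v | v] /=; first by rewrite comb_add phi_mx_add.
by rewrite phi_mxM phi_alt; apply/matrixP => i k; rewrite !mxE linear0.
Qed.

End Coordinates.

Section AlternatingSpaces.
Variable K : fieldType.

Definition alternating_space m n (M : mxspace K m n) : Prop :=
  exists2 Psi : 'cV[K]_n -> 'M[K]_(m, n),
    alternating_family Psi & forall A, M A <-> exists u, A = Psi u.

Lemma alternating_space_equiv m n (M M' : mxspace K m n) :
  mx_equiv M M' -> alternating_space M -> alternating_space M'.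
Proof.
case=> P [Q [P_unit Q_unit MM']] [Psi altPsi MPsi].
exists (fun u => invmx P *m Psi (invmx Q *m u) *m invmx Q).
  exact: alternating_family_equiv.
move=> A; split=> [M'A | [u ->]].
  have /MPsi [u PAQ] : M (P *m A *m Q) by apply/MM'; exists A.
  by exists (Q *m u); rewrite mulKmx // -PAQ mulmxA mulmxK // mulKmx.
have /MM' [B M'B ->] : M (Psi (invmx Q *m u)) by apply/MPsi; exists (invmx Q *m u).
by rewrite mulmxA mulmxK // mulKmx.
Qed.

Lemma alternating_space_column_property m n (M : mxspace K m n) :
  alternating_space M -> column_property M.
Proof.
move=> altM r s _ /andP[s_gt0 s_le_n] M' MM' decM' _ [A M'A ->].
have [Psi altPsi M'Psi] := alternating_space_equiv MM' altM.
have [u ->] := (M'Psi A).1 M'A.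
rewrite (lower_blockE _ _ s_le_n).
apply: (alternating_family_compression altPsi s_gt0) => y.
by apply: (decomposed_lower_right s_le_n decM'); apply/M'Psi; exists y.
Qed.

Lemma S_mx_alternating (U V : vectType K) (phi : U -> U -> V) n m
    (e : n.-tuple U) (f : m.-tuple V) :
  alt_bilinear phi -> basis_of fullv e -> alternating_space (S_mx phi e f).
Proof.
case=> phi_linr phi_linl phi_alt e_basis.
exists (fun v => phi_mx phi e f (comb e v)); first exact: phi_coord_family.
move=> A; split=> [[x ->] | [v ->]]; last by exists (comb e v).
by exists (\col_j coord e j x); rewrite combK.
Qed.

End AlternatingSpaces.

Theorem mainTheorem16 (K : fieldType) (U V : vectType K) (phi : U -> U -> V) :
  alt_bilinear phi -> fully_regular phi ->
  forall (n m : nat) (e : n.-tuple U) (f : m.-tuple V),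
    basis_of fullv e -> basis_of fullv f ->
    column_property (S_mx phi e f).
Proof.
move=> phi_alt _ n m e f e_basis _.
exact/alternating_space_column_property/S_mx_alternating.
Qed.
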